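(* Let $(W;T,\rho)$ be an ENE-representation of an ENL algebra $(\mathfrak g,[\cdot,\cdot]_{\mathfrak g},E)$. Define $\rho^*:\mathfrak g\to\mathfrak{gl}(W^* )$ by $\langle\rho^*(x)\xi,u\rangle=-\langle\xi,\rho(x)u\rangle$ and $T^*:W^*\to W^*$ by $\langle T^*\xi,u\rangle=\langle\xi,Tu\rangle$. Then $(W^*;T^*,\rho^* )$ is an ENE-representation of $(\mathfrak g,[\cdot,\cdot]_{\mathfrak g},E)$.
   Context: Vector spaces are finite-dimensional over an algebraically closed field of characteristic zero. An ENL algebra $(\mathfrak g,[\cdot,\cdot],E)$ is a Lie algebra with linear $E$ satisfying $E[x,y]=[x,Ey]$ for all $x,y$. An ENE-representation $(W;T,\rho)$ of $(\mathfrak g,E)$ is a Lie algebra representation $\rho:\mathfrak g\to\mathfrak{gl}(W)$ with linear $T:W\to W$ such that $T(\rho(x)u)=\rho(Ex)u=\rho(x)(Tu)$ for all $x\in\mathfrak g,u\in W$. *)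

From HB Require Import structures.
From mathcomp Require Import all_boot all_order all_algebra.
Set Implicit Arguments. Unset Strict Implicit. Unset Printing Implicit Defensive.
Import GRing.Theory.
Local Open Scope ring_scope.

Definition is_lie_bracket (K : fieldType) (g : vectType K) (br : g -> g -> g) : Prop :=
  [/\ (forall (a : K) x y z, br (a *: x + y) z = a *: br x z + br y z),
      (forall (a : K) x y z, br z (a *: x + y) = a *: br z x + br z y),
      (forall x, br x x = 0) &
      (forall x y z, br x (br y z) + br y (br z x) + br z (br x y) = 0)].

Definition ENL_algebra (K : fieldType) (g : vectType K) (br : g -> g -> g)
  (E : 'End(g)) : Prop :=
  is_lie_bracket br /\ (forall x y, E (br x y) = br x (E y)).

Definition is_lie_rep (K : fieldType) (g : vectType K) (br : g -> g -> g)
  (W : vectType K) (rho : g -> 'End(W)) : Prop :=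
  (forall (a : K) x y, rho (a *: x + y) = a *: rho x + rho y) /\
  (forall x y, rho (br x y) = (rho x \o rho y)%VF - (rho y \o rho x)%VF).

Definition ENE_rep (K : fieldType) (g : vectType K) (br : g -> g -> g)
  (E : 'End(g)) (W : vectType K) (T : 'End(W)) (rho : g -> 'End(W)) : Prop :=
  is_lie_rep br rho /\
  (forall x u, T (rho x u) = rho (E x) u) /\
  (forall x u, rho (E x) u = rho x (T u)).

(* Dual space W^* = linear maps W -> K. The pairing <xi, u> is xi u. *)
Definition dual (K : fieldType) (W : vectType K) := 'Hom(W, K^o).

Definition dual_map (K : fieldType) (W : vectType K) (T : 'End(W)) : 'End(dual W) :=
  linfun (fun xi : dual W => (xi \o T)%VF).

Definition dual_rep (K : fieldType) (g : vectType K) (W : vectType K)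
  (rho : g -> 'End(W)) (x : g) : 'End(dual W) :=
  linfun (fun xi : dual W => - (xi \o rho x)%VF).

(** Dualising turns each ENE identity into the other one: the pairing
    [<T^* (rho^* x xi), u> = - <xi, rho x (T u)>] is [<rho^* (E x) xi, u>] by the
    second identity for [(W; T, rho)], and symmetrically.  That [rho^*] is again a
    representation is the usual contragredient computation, where the two minus
    signs make the commutator come out in the right order. *)
From HB Require Import structures.
From mathcomp Require Import all_boot all_order all_algebra.
Local Open Scope ring_scope.
Import GRing.Theory.

Lemma linfun_linearE (K : fieldType) (aT rT : vectType K) (f : aT -> rT) :
  linear f -> linfun f =1 f.
Proof.
move=> lin_f.
exact: (lfunE (HB.pack f (GRing.isLinear.Build _ _ _ _ f lin_f))).
Qed.

Section DualRepresentation.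

Variables (K : fieldType) (g W : vectType K).
Implicit Types (T : 'End(W)) (rho : g -> 'End(W)) (xi : dual W) (u : W).

Lemma dual_mapE T xi u : dual_map T xi u = xi (T u).
Proof.
rewrite /dual_map linfun_linearE ?comp_lfunE // => a xi1 xi2.
by rewrite comp_lfunDl -comp_lfunZl.
Qed.

Lemma dual_repE rho x xi u : dual_rep rho x xi u = - xi (rho x u).
Proof.
rewrite /dual_rep linfun_linearE ?opp_lfunE ?comp_lfunE // => a xi1 xi2.
by rewrite comp_lfunDl -comp_lfunZl opprD scalerN.
Qed.

Lemma dual_rep_is_lie_rep (br : g -> g -> g) rho :
  is_lie_rep br rho -> is_lie_rep br (dual_rep rho).
Proof.
move=> [rho_lin rho_br]; split=> [a x y | x y];
  apply/lfunP => xi; apply/lfunP => u.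
- rewrite !(dual_repE, add_lfunE, scale_lfunE) rho_lin.
  by rewrite add_lfunE scale_lfunE linearD linearZ /= opprD scalerN.
- rewrite !(dual_repE, add_lfunE, opp_lfunE, comp_lfunE) rho_br.
  by rewrite add_lfunE opp_lfunE !comp_lfunE linearB /= !opprK opprB.
Qed.

Lemma dual_map_dual_rep (E : 'End(g)) T rho :
  (forall x u, rho (E x) u = rho x (T u)) ->
  forall x xi, dual_map T (dual_rep rho x xi) = dual_rep rho (E x) xi.
Proof.
move=> rhoE x xi; apply/lfunP => u.
by rewrite dual_mapE !dual_repE rhoE.
Qed.

Lemma dual_rep_dual_map (E : 'End(g)) T rho :
  (forall x u, T (rho x u) = rho (E x) u) ->
  forall x xi, dual_rep rho (E x) xi = dual_rep rho x (dual_map T xi).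
Proof.
move=> Trho x xi; apply/lfunP => u.
by rewrite !dual_repE dual_mapE Trho.
Qed.

End DualRepresentation.

Theorem proposition1p14 (K : closedFieldType) (hK : [pchar K] =i pred0)
  (g : vectType K) (br : g -> g -> g) (E : 'End(g))
  (W : vectType K) (T : 'End(W)) (rho : g -> 'End(W)) :
  ENL_algebra br E -> ENE_rep br E T rho ->
  ENE_rep br E (dual_map T) (dual_rep rho).
Proof.
move=> _ [rep [Trho rhoE]]; split; first exact: dual_rep_is_lie_rep.
split; [exact: dual_map_dual_rep | exact: dual_rep_dual_map].
Qed.
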